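(* Let $R$ be a commutative unital ring, $G$ a group and $(\mathcal B_1,\Phi_1)\subseteq(\mathcal B_2,\Phi_2)$ a partial subaction of $G$ on generalized Boolean algebras, $\Phi_k=(\{\mathcal I_{k,t}\},\{\phi_{k,t}\})$. Suppose $\mathcal B_1$ is an ideal of $\mathcal B_2$ and $\mathcal I_{1,g}=\mathcal B_1\cap\mathcal I_{2,g}$ for all $g\in G$. Then $\mathrm{Lc}(R,\mathcal B_1)\rtimes_{\Phi_1}G$ is a two-sided ideal of $\mathrm{Lc}(R,\mathcal B_2)\rtimes_{\Phi_2}G$.
   Context: A generalized Boolean algebra is a distributive relatively complemented lattice with least element $0$; an ideal is a subset closed under finite joins and under meets with arbitrary elements. A partial action $\Phi$ of $G$ on $\mathcal B$: ideals $\mathcal I_t$ and isomorphisms $\phi_t:\mathcal I_{t^{-1}}\to\mathcal I_t$ with $\mathcal I_e=\mathcal B$, $\phi_e=\mathrm{id}$, $\phi_s(\mathcal I_{s^{-1}}\cap\mathcal I_t)=\mathcal I_s\cap\mathcal I_{st}$, $\phi_s\phi_t=\phi_{st}$ where defined. A partial subaction: $\mathcal B_1\subseteq\mathcal B_2$ sub generalized Boolean algebra, $\mathcal I_{1,t}\subseteq\mathcal I_{2,t}$, $\phi_{2,t}$ restricting to $\phi_{1,t}$. $\mathrm{Lc}(R,\mathcal B)$ is the algebra of locally constant compactly supported $R$-valued functions on the Stone space of $\mathcal B$, spanned by idempotents $1_U$; $\mathrm{Lc}(R,\mathcal B)\rtimes_\Phi G=\bigoplus_g\mathrm{Lc}(R,\mathcal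 I_g)\delta_g$ with $U\delta_g:=1_U\delta_g$ and $(U\delta_g)(V\delta_h)=\phi_g(\phi_{g^{-1}}(U)\cap V)\delta_{gh}$. The subalgebra $\mathrm{Lc}(R,\mathcal B_1)\rtimes_{\Phi_1}G$ is identified with the $R$-span of $\{U\delta_g:U\in\mathcal I_{1,g}\}$. *)

From HB Require Import structures.
From mathcomp Require Import all_boot all_order all_algebra.
From mathcomp Require Import boolp classical_sets fsbigop.
Set Implicit Arguments. Unset Strict Implicit. Unset Printing Implicit Defensive.
Import Order.TTheory GRing.Theory.

Local Open Scope order_scope.

(* Generalized Boolean algebras are MathComp's [cbDistrLatticeType]s:
   distributive lattices with bottom and relative (sectional) complements.
   Sub-structures and ideals are given as predicates on the big algebra.    *)
Section GBA.
Context {d : Order.disp_t} {B : cbDistrLatticeType d}.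

Definition sub_gba (S : pred B) : Prop :=
  [/\ \bot \in S,
      (forall x y, x \in S -> y \in S -> x `|` y \in S),
      (forall x y, x \in S -> y \in S -> x `&` y \in S) &
      (forall x y, x \in S -> y \in S -> x `\` y \in S)].

Definition gba_ideal (S J : pred B) : Prop :=
  [/\ {subset J <= S}, \bot \in J,
      (forall x y, x \in J -> y \in J -> x `|` y \in J) &
      (forall x y, x \in J -> y \in S -> x `&` y \in J)].

End GBA.

(* The isomorphisms phi_t : I_{t^-1} -> I_t are given by total functions
   phi t : B -> B, only their values on I_{t^-1} matter.                    *)
Section PartialAction.
Context {G : groupType} {d : Order.disp_t} {B : cbDistrLatticeType d}.

Definition partial_action (S : pred B) (I : G -> pred B) (phi : G -> B -> B)
  : Prop :=
  [/\
      (forall t, gba_ideal S (I t)),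
      (forall t,
         [/\ (forall x, x \in I (monoid.inv t) -> phi t x \in I t),
             {in I (monoid.inv t) &, injective (phi t)},
             (forall y, y \in I t -> exists2 x, x \in I (monoid.inv t) & phi t x = y),
             {in I (monoid.inv t) &, forall x y, phi t (x `|` y) = phi t x `|` phi t y} &
             {in I (monoid.inv t) &, forall x y, phi t (x `&` y) = phi t x `&` phi t y}]),
      (I monoid.one =i S /\ forall x, x \in S -> phi monoid.one x = x),
      (forall s t y, (y \in I s /\ y \in I (monoid.mul s t)) <->
                     exists x, [/\ x \in I (monoid.inv s), x \in I t & phi s x = y]) &
      (forall s t x, x \in I (monoid.inv t) -> phi t x \in I (monoid.inv s) ->
                     phi s (phi t x) = phi (monoid.mul s t) x)].

End PartialAction.

(* The Stone space of B: nonzero lattice homomorphisms B -> {false, true}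
   preserving \bot (equivalently prime filters).  We represent
   Lc(R,B) x| G by R-valued functions on G x (B -> bool) that vanish off the
   Stone space; U delta_g is the function (k, chi) |-> [k = g] * 1_U(chi). *)
Section CrossedProduct.
Context {R : comPzRingType} {G : groupType} {d : Order.disp_t}
        {B : cbDistrLatticeType d}.

Definition is_char (chi : B -> bool) : Prop :=
  [/\ chi \bot = false,
      (forall x y, chi (x `|` y) = chi x || chi y),
      (forall x y, chi (x `&` y) = chi x && chi y) &
      exists x, chi x].

Definition cpfun := G -> (B -> bool) -> R.

Definition gen (U : B) (g : G) : cpfun :=
  fun k chi => if `[< is_char chi >] && (k == g) && chi U then 1%R else 0%R.

Definition in_cp (I : G -> pred B) (x : cpfun) : Prop :=
  exists s : seq (R * B * G),
    (forall p, p \in s -> p.1.2 \in I p.2) /\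
    x = (fun k chi => \sum_(p <- s) p.1.1 * gen p.1.2 p.2 k chi)%R.

(* the partial action on the Stone space: theta_g : D_{g^-1} -> D_g,
   theta_g(eta) = the filter generated by phi_g(eta /\ I_{g^-1}) *)
Definition theta (I : G -> pred B) (phi : G -> B -> B) (g : G)
  (chi : B -> bool) : B -> bool :=
  fun V => `[< exists W, [/\ W \in I (monoid.inv g), chi W & phi g W <= V] >].

(* multiplication of the crossed product (convolution):
   (a * b)(k, chi) = sum_g a(g, chi) b(g^-1 k, theta_{g^-1} chi);
   it satisfies (U delta_g)(V delta_h) = phi_g(phi_{g^-1}(U) /\ V) delta_{gh} *)
Definition cp_mul (I : G -> pred B) (phi : G -> B -> B) (a b : cpfun)
  : cpfun :=
  fun k chi =>
    (\sum_(g \in [set: G]) a g chi * b (monoid.mul (monoid.inv g) k) (theta I phi (monoid.inv g) chi))%R.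

Definition cp_add (a b : cpfun) : cpfun := fun k chi => (a k chi + b k chi)%R.
Definition cp_opp (a : cpfun) : cpfun := fun k chi => (- a k chi)%R.
Definition cp_zero : cpfun := fun _ _ => 0%R.

Definition two_sided_ideal (A2 A1 : cpfun -> Prop)
  (mul2 : cpfun -> cpfun -> cpfun) : Prop :=
  [/\ (forall x, A1 x -> A2 x),
      A1 cp_zero,
      (forall x y, A1 x -> A1 y -> A1 (cp_add x y)),
      (forall x, A1 x -> A1 (cp_opp x)) &
      (forall x y, A1 x -> A2 y -> A1 (mul2 y x) /\ A1 (mul2 x y))].

End CrossedProduct.

(* By bilinearity of the convolution, everything reduces to the product of
   two generators, (U delta_g)(V delta_h) = phi_g(phi_{g^-1}(U) /\ V) delta_gh.
   On the Stone space this is the identity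
   chi(U) && theta_{g^-1}(chi)(V) = chi(phi_g(phi_{g^-1}(U) /\ V)),
   where theta_{g^-1}(chi) is again a character whenever chi(U) holds.
   If U or V lies in I_1, then X = phi_{g^-1}(U) /\ V lies in B1 (an ideal
   of B2 containing phi_{g^-1}(I_{1,g})) and in I_{2,g^-1} /\ I_{2,h}, hence
   in I_{1,g^-1} /\ I_{1,h}, so that phi_g(X) lies in I_{1,gh}. *)
From HB Require Import structures.
From mathcomp Require Import all_boot all_order all_algebra.
From mathcomp Require Import boolp classical_sets fsbigop.
Set Implicit Arguments. Unset Strict Implicit. Unset Printing Implicit Defensive.
Import Order.TTheory GRing.Theory.
Local Open Scope order_scope.

Notation inv := monoid.inv.
Notation mul := monoid.mul.

Section PartialActionTheory.
Context {G : groupType} {d : Order.disp_t} {B : cbDistrLatticeType d}.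
Variables (S : pred B) (I : G -> pred B) (phi : G -> B -> B).
Hypothesis PA : partial_action S I phi.

Lemma pact_mem g x : x \in I (inv g) -> phi g x \in I g.
Proof. by case: PA => _ /(_ g) [+ _ _ _ _] _ _ _; apply. Qed.

Lemma pact_memV g x : x \in I g -> phi (inv g) x \in I (inv g).
Proof. by move=> xI; apply: pact_mem; rewrite monoid.invgK. Qed.

Lemma pactI g : {in I (inv g) &, {morph phi g : x y / x `&` y}}.
Proof. by case: PA => _ /(_ g) []. Qed.

Lemma pact_sub g : {subset I g <= S}.
Proof. by case: PA => /(_ g) []. Qed.

Lemma pact_bot_mem g : \bot \in I g.
Proof. by case: PA => /(_ g) []. Qed.

Lemma pact_memI g x y : x \in I g -> y \in S -> x `&` y \in I g.
Proof. by case: PA => /(_ g) [_ _ _ + _ _ _ _]; apply. Qed.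

Lemma pactU g : {in I (inv g) &, {morph phi g : x y / x `|` y}}.
Proof. by case: PA => _ /(_ g) []. Qed.

Lemma pactKV g : {in I g, cancel (phi (inv g)) (phi g)}.
Proof.
move=> x xI; case: PA => _ _ [_ phi1] _ phiM.
rewrite phiM ?monoid.invgK ?pact_memV // monoid.mulgV phi1 //.
exact: pact_sub xI.
Qed.

Lemma pactVK g : {in I (inv g), cancel (phi g) (phi (inv g))}.
Proof. by have := @pactKV (inv g); rewrite monoid.invgK. Qed.

Lemma pact_le g x y : x \in I (inv g) -> y \in I (inv g) -> x <= y ->
  phi g x <= phi g y.
Proof. by move=> xI yI /meet_idPl <-; rewrite pactI // leIr. Qed.

Lemma pact0 g : phi g \bot = \bot.
Proof.
rewrite -{1}(meetx0 (phi (inv g) \bot)) pactI ?pact_memV ?pact_bot_mem //.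
by rewrite pactKV ?pact_bot_mem // meet0x.
Qed.

Lemma pact_memM s t x : x \in I (inv s) -> x \in I t -> phi s x \in I (mul s t).
Proof.
by move=> xs xt; case: PA => _ _ _ /(_ s t (phi s x)) [_ /(_ (ex_intro _ x (And3 xs xt erefl)))] [].
Qed.

End PartialActionTheory.

Section StoneSpace.
Context {G : groupType} {d : Order.disp_t} {B : cbDistrLatticeType d}.
Variables (I : G -> pred B) (phi : G -> B -> B).
Hypothesis PA : partial_action predT I phi.

Definition prod_set (g : G) (U V : B) : B := phi g (phi (inv g) U `&` V).

Lemma char_le (chi : B -> bool) x y : is_char chi -> x <= y -> chi x -> chi y.
Proof. by case=> _ _ chi_meet _ /meet_idPl <-; rewrite chi_meet => /andP[]. Qed.

Lemma thetaVP g (chi : B -> bool) V :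
  reflect (exists W, [/\ W \in I g, chi W & phi (inv g) W <= V])
          (theta I phi (inv g) chi V).
Proof. by rewrite /theta monoid.invgK; apply: asboolP. Qed.

Lemma theta_char g U (chi : B -> bool) : U \in I g -> is_char chi -> chi U ->
  is_char (theta I phi (inv g) chi).
Proof.
move=> UI chiC chiU; have [chi_bot chi_join chi_meet _] := chiC.
split.
- apply/thetaVP => -[W [WI chiW]]; rewrite lex0 => /eqP W0.
  by move: chiW; rewrite -(pactKV PA WI) W0 (pact0 PA) chi_bot.
- move=> x y; apply/idP/orP => [/thetaVP [W [WI chiW le]]|].
    pose P := phi (inv g) W; have PI : P \in I (inv g) by apply: (pact_memV PA).
    have Psplit : W = phi g (P `&` x) `|` phi g (P `&` y).
      rewrite -(pactU PA) ?(pact_memI PA) // -meetUr.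
      by rewrite (meet_idPl le) (pactKV PA).
    have theta_of z : chi (phi g (P `&` z)) -> theta I phi (inv g) chi z.
      move=> chiPz; apply/thetaVP; exists (phi g (P `&` z)).
      by rewrite (pact_mem PA) ?(pactVK PA) ?leIr ?(pact_memI PA).
    by move: chiW; rewrite Psplit chi_join => /orP[/theta_of|/theta_of]; auto.
  by case=> /thetaVP [W [WI chiW le]]; apply/thetaVP; exists W;
     split => //; rewrite (le_trans le) ?leUl ?leUr.
- move=> x y; apply/thetaVP/andP => [[W [WI chiW le]]|].
    by split; apply/thetaVP; exists W; split => //;
       rewrite (le_trans le) ?leIl ?leIr.
  case=> /thetaVP [W [WI chiW le]] /thetaVP [W' [WI' chiW' le']].
  exists (W `&` W'); split; first exact: (pact_memI PA).
    by rewrite chi_meet chiW chiW'.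
  by rewrite (pactI PA) ?monoid.invgK // leI2.
- by exists (phi (inv g) U); apply/thetaVP; exists U.
Qed.

Lemma char_prod_set g U V (chi : B -> bool) : U \in I g -> is_char chi ->
  chi U && theta I phi (inv g) chi V = chi (prod_set g U V).
Proof.
move=> UI chiC; have [_ _ chi_meet _] := chiC.
have UVI : phi (inv g) U `&` V \in I (inv g) by rewrite (pact_memI PA) ?(pact_memV PA).
have le_U : prod_set g U V <= U.
  by rewrite -{2}(pactKV PA UI) (pact_le PA) ?(pact_memV PA) ?leIl.
apply/andP/idP => [[chiU /thetaVP [W [WI chiW le]]]|chiUV].
  have WUI : W `&` U \in I g by apply: (pact_memI PA).
  apply: (char_le chiC (x := W `&` U)); last by rewrite chi_meet chiW chiU.
  rewrite -[W `&` U](pactKV PA WUI) (pact_le PA) ?(pact_memV PA) //.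
  by rewrite (pactI PA) ?monoid.invgK // meetC leI2.
split; first exact: char_le chiC le_U chiUV.
apply/thetaVP; exists (prod_set g U V).
by rewrite (pact_mem PA) // (pactVK PA) // leIr.
Qed.

Lemma prod_set_domain g h U V : U \in I g -> V \in I h ->
  phi (inv g) U `&` V \in I (inv g) /\ phi (inv g) U `&` V \in I h.
Proof.
by move=> UI VI; rewrite (pact_memI PA) ?(pact_memV PA) // meetC (pact_memI PA).
Qed.

End StoneSpace.

Local Open Scope ring_scope.

Lemma fsbig_setT_seq (G : choiceType) (R : nmodType) (F : G -> R) (r : seq G) :
  uniq r -> (forall g, g \notin r -> F g = 0) ->
  \sum_(g \in [set: G]) F g = \sum_(g <- r) F g.
Proof.
move=> r_uniq F0; rewrite (fsbigE r) //; last by move=> g _; apply: F0.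
by apply: eq_bigl => g; rewrite in_setT.
Qed.

Section CrossedProduct.
Context {R : comPzRingType} {G : groupType} {d : Order.disp_t}
        {B : cbDistrLatticeType d}.
Variables (I : G -> pred B) (phi : G -> B -> B).
Hypothesis PA : partial_action predT I phi.

Definition lincomb (s : seq (R * B * G)) : cpfun :=
  fun k chi => \sum_(p <- s) p.1.1 * gen p.1.2 p.2 k chi.

Definition prod_term (q p : R * B * G) : R * B * G :=
  (q.1.1 * p.1.1, prod_set phi q.2 q.1.2 p.1.2, mul q.2 p.2).

Lemma gen_out (U : B) (g k : G) chi : k != g -> gen (R:=R) U g k chi = 0.
Proof. by move=> /negbTE kg; rewrite /gen kg andbF. Qed.

Lemma cp_mul_genl U g (b : cpfun) k chi :
  cp_mul I phi (gen (R:=R) U g) b k chi =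
  if `[< is_char chi >] && chi U
  then b (mul (inv g) k) (theta I phi (inv g) chi) else 0.
Proof.
rewrite /cp_mul (fsbig_setT_seq (r := [:: g])) //; last first.
  by move=> g'; rewrite inE => g'g; rewrite gen_out ?mul0r.
by rewrite big_seq1 /gen eqxx andbT; case: ifP; rewrite ?mul1r ?mul0r.
Qed.

Lemma cp_mul_lincombl s (b : cpfun) k chi :
  cp_mul I phi (lincomb s) b k chi =
  \sum_(p <- s) p.1.1 * cp_mul I phi (gen p.1.2 p.2) b k chi.
Proof.
set r := undup (map snd s).
have gen_outr p g : p \in s -> g \notin r -> gen (R:=R) p.1.2 p.2 g chi = 0.
  move=> ps gr; rewrite gen_out //; apply: contraNneq gr => ->.
  by rewrite mem_undup map_f.
rewrite /cp_mul (fsbig_setT_seq (r := r)) ?undup_uniq //; last first.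
  by move=> g gr; rewrite /lincomb big_seq big1 ?mul0r // => p ps; rewrite gen_outr ?mulr0.
under eq_bigr do rewrite /lincomb big_distrl.
rewrite exchange_big [LHS]big_seq [RHS]big_seq; apply: eq_bigr => p ps.
rewrite /= (fsbig_setT_seq (r := r)) ?undup_uniq ?big_distrr //=.
  by apply: eq_bigr => g _; rewrite mulrA.
by move=> g gr; rewrite gen_outr ?mul0r.
Qed.

Lemma cp_mul_gen_lincomb U g s k chi :
  cp_mul I phi (gen U g) (lincomb s) k chi =
  \sum_(p <- s) p.1.1 * cp_mul I phi (gen U g) (gen p.1.2 p.2) k chi.
Proof.
rewrite cp_mul_genl; under eq_bigr do rewrite cp_mul_genl.
by case: ifP => // _; rewrite big1 // => p _; rewrite mulr0.
Qed.

Lemma cp_mul_gen U g V h : U \in I g -> V \in I h ->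
  cp_mul I phi (gen U g) (gen V h) = gen (R:=R) (prod_set phi g U V) (mul g h).
Proof.
move=> UI VI; apply: funext => k; apply: funext => chi.
rewrite cp_mul_genl /gen; case: (asboolP (is_char chi)) => //= chiC.
rewrite -(char_prod_set PA V UI chiC).
have -> : (mul (inv g) k == h) = (k == mul g h).
  by apply/eqP/eqP => [<-|->]; rewrite ?monoid.mulVKg ?monoid.mulKg.
case chiU: (chi U); last by rewrite andbF.
by rewrite (asboolT (theta_char PA UI chiC chiU)).
Qed.

Lemma cp_mul_lincomb t s :
  (forall q, q \in t -> q.1.2 \in I q.2) ->
  (forall p, p \in s -> p.1.2 \in I p.2) ->
  cp_mul I phi (lincomb t) (lincomb s) = lincomb [seq prod_term q p | q <- t, p <- s].
Proof.
move=> tI sI; apply: funext => k; apply: funext => chi.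
rewrite cp_mul_lincombl /lincomb big_allpairs_dep [LHS]big_seq [RHS]big_seq.
apply: eq_bigr => q qt; rewrite cp_mul_gen_lincomb big_distrr big_seq [RHS]big_seq.
by apply: eq_bigr => p ps; rewrite (cp_mul_gen (tI q qt) (sI p ps)); apply: mulrA.
Qed.

Lemma in_cp_mul (J K L : G -> pred B) (x y : cpfun (R:=R)) :
  (forall g, {subset J g <= I g}) -> (forall g, {subset K g <= I g}) ->
  (forall g h U V, U \in J g -> V \in K h -> prod_set phi g U V \in L (mul g h)) ->
  in_cp J x -> in_cp K y -> in_cp L (cp_mul I phi x y).
Proof.
move=> JI KI prodL [t [tJ ->]] [s [sK ->]].
exists [seq prod_term q p | q <- t, p <- s]; split.
  by move=> _ /allpairsP [[q p] [/= qt ps ->]]; apply: prodL; [apply: tJ|apply: sK].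
by apply: cp_mul_lincomb => [q /tJ|p /sK]; [apply: JI|apply: KI].
Qed.

End CrossedProduct.

Section CrossedProductAdditive.
Context {R : comPzRingType} {G : groupType} {d : Order.disp_t}
        {B : cbDistrLatticeType d}.
Variable I : G -> pred B.

Lemma in_cp_sub (J : G -> pred B) (x : cpfun (R:=R)) :
  (forall g, {subset I g <= J g}) -> in_cp I x -> in_cp J x.
Proof. by move=> IJ [s [sI ->]]; exists s; split => // p /sI /IJ. Qed.

Lemma in_cp0 : in_cp I (cp_zero (R:=R)).
Proof.
by exists [::]; split => //; apply: funext => k; apply: funext => chi; rewrite big_nil.
Qed.

Lemma in_cp_add (x y : cpfun (R:=R)) : in_cp I x -> in_cp I y -> in_cp I (cp_add x y).
Proof.
move=> [s [sI ->]] [t [tI ->]]; exists (s ++ t); split.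
  by move=> p; rewrite mem_cat => /orP[/sI|/tI].
by apply: funext => k; apply: funext => chi; rewrite big_cat.
Qed.

Lemma in_cp_opp (x : cpfun (R:=R)) : in_cp I x -> in_cp I (cp_opp x).
Proof.
move=> [s [sI ->]]; exists [seq (- p.1.1, p.1.2, p.2) | p <- s]; split.
  by move=> _ /mapP [p /sI pI ->].
apply: funext => k; apply: funext => chi; rewrite /cp_opp big_map -sumrN.
by apply: eq_bigr => p _; rewrite mulNr.
Qed.

End CrossedProductAdditive.

Section IdealRestriction.
Context {G : groupType} {d : Order.disp_t} {B : cbDistrLatticeType d}.
Variables (B1 : pred B) (I1 I2 : G -> pred B) (phi : G -> B -> B).
Hypotheses (PA2 : partial_action predT I2 phi) (PA1 : partial_action B1 I1 phi).
Hypothesis B1_ideal : gba_ideal predT B1.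
Hypothesis I1_restr : forall g x, (x \in I1 g) = (x \in B1) && (x \in I2 g).

Lemma ideal_memIl x y : x \in B1 -> x `&` y \in B1.
Proof. by case: B1_ideal => _ _ _ B1I xB1; apply: B1I. Qed.

Lemma prod_set_mem_restr g h U V : U \in I2 g -> V \in I2 h ->
  phi (inv g) U `&` V \in B1 -> prod_set phi g U V \in I1 (mul g h).
Proof.
move=> UI VI XB1; have [XV Xh] := prod_set_domain PA2 UI VI.
by apply: (pact_memM PA1); rewrite I1_restr XB1.
Qed.

Lemma prod_set_mem_ideall g h U V : U \in I2 g -> V \in I1 h ->
  prod_set phi g U V \in I1 (mul g h).
Proof.
rewrite I1_restr => UI /andP[VB1 VI].
by apply: prod_set_mem_restr; rewrite // meetC ideal_memIl.
Qed.

Lemma prod_set_mem_idealr g h U V : U \in I1 g -> V \in I2 h ->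
  prod_set phi g U V \in I1 (mul g h).
Proof.
move=> UI VI; have := pact_memV PA1 UI; rewrite I1_restr => /andP[phiUB1 _].
move: UI; rewrite I1_restr => /andP[_ UI].
by apply: prod_set_mem_restr; rewrite ?ideal_memIl.
Qed.

End IdealRestriction.

Unset Implicit Arguments.
Unset Strict Implicit.

Theorem lemma4p10 (R : comPzRingType) (G : groupType) (d : Order.disp_t)
  (B : cbDistrLatticeType d)
  (B1 : pred B) (I1 I2 : G -> pred B) (phi : G -> B -> B) :
  (* (B1, Phi1) is a partial subaction of (B, Phi2), Phi1 = restriction *)
  sub_gba B1 ->
  partial_action predT I2 phi ->
  partial_action B1 I1 phi ->
  (forall t, {subset I1 t <= I2 t}) ->
  (* B1 is an ideal of B2 and I_{1,g} = B1 /\ I_{2,g} *)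
  gba_ideal predT B1 ->
  (forall g x, (x \in I1 g) = (x \in B1) && (x \in I2 g)) ->
  two_sided_ideal (in_cp (R:=R) I2) (in_cp (R:=R) I1) (cp_mul I2 phi).
Proof.
move=> _ PA2 PA1 sub12 B1_ideal I1_restr.
have subI2 g : {subset I2 g <= I2 g} by [].
split.
- by move=> x; apply: in_cp_sub.
- exact: in_cp0.
- exact: in_cp_add.
- exact: in_cp_opp.
- move=> x y x1 y2; split.
  + apply: in_cp_mul y2 x1 => //.
    exact: prod_set_mem_ideall PA2 PA1 B1_ideal I1_restr.
  + apply: in_cp_mul x1 y2 => //.
    exact: prod_set_mem_idealr PA2 PA1 B1_ideal I1_restr.
Qed.
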